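(* Let $T>0$, $\sigma>0$, $\lambda>0$, $\kappa>0$, let the cost function be $g(z)=\kappa z$, and let $H^1\in\mathcal{C}^2_b(\mathbb{R})$, $H^1\ne0$. For each $N\ge1$ consider the $N$-player risk-neutral game with claims $H^1$ for player 1 and $H^i=0$ for $i=2,\dots,N$, and let $(v^{1,N},\dots,v^{N,N})$ be the classical solution of $$0=v^j_t+\tfrac12\sigma^2v^j_{pp}+\lambda\dot X^*\,v^j_p-\kappa\,\dot X^j\,\dot X^*,\qquad v^j(T,p)=H^j(p),\quad j=1,\dots,N,$$ with equilibrium trading speeds $\dot X^j=\frac{\lambda}{\kappa}\Big(v^j_p-\frac{1}{N+1}\sum_{i=1}^Nv^i_p\Big)$ and aggregate speed $\sum_{i=1}^N\dot X^i=\frac{\lambda}{\kappa(N+1)}\sum_{i=1}^Nv^i_p$. Then the aggregate equilibrium trading speed satisfies $\lim_{N\to\infty}\sum_{i=1}^N\dot X^i_t=0$.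
   Context: Setting: players $j=1,\dots,N$ hold cash-settled claims $H^j(P_T)$ on a stock with price $dP_t=\sigma dB_t+\lambda\sum_i\dot X^i_t dt$, where $X^i$ is player $i$'s (absolutely continuous) holding with $X^i_0=0$, and player $j$ maximizes $\mathbb{E}[-\int_0^T\dot X^j_t\,g(\sum_i\dot X^i_t)dt+H^j(P_T)]$. The functions $v^j$ are the players' value functions and the formulas give the Nash equilibrium feedback trading speeds (functions of time and spot price). $\mathcal{C}^2_b$ denotes functions bounded together with derivatives up to order 2. *)

From Stdlib Require Import Reals Arith.
From Coquelicot Require Import Coquelicot.
Open Scope R_scope.

Definition C2b (H : R -> R) : Prop :=
  exists H' H'' : R -> R,
    (forall p, is_derive H p (H' p)) /\
    (forall p, is_derive H' p (H'' p)) /\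
    (forall p, continuous H'' p) /\
    (exists M, forall p, Rabs (H p) <= M /\ Rabs (H' p) <= M /\ Rabs (H'' p) <= M).

Definition cont_within (D : R * R -> Prop) (f : R -> R -> R) (t p : R) : Prop :=
  filterlim (fun z : R * R => f (fst z) (snd z)) (within D (locally (t, p)))
            (locally (f t p)).

(* Players are indexed 1..N; sum over players. *)
Definition psum (N : nat) (f : nat -> R) : R := sum_n_m f 1 N.

(* Equilibrium trading speed of player j (vp i t p = v^i_p(t,p)). *)
Definition speed (lam kappa : R) (N : nat) (vp : nat -> R -> R -> R)
  (j : nat) (t p : R) : R :=
  lam / kappa * (vp j t p - / INR (N + 1) * psum N (fun i => vp i t p)).

Definition agg_speed (lam kappa : R) (N : nat) (vp : nat -> R -> R -> R)
  (t p : R) : R :=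
  psum N (fun i => speed lam kappa N vp i t p).

Definition claims (H1 : R -> R) (j : nat) : R -> R :=
  if Nat.eqb j 1 then H1 else fun _ => 0.

Definition classical_solution (T sigma lam kappa : R) (N : nat)
  (H : nat -> R -> R) (v vt vp vpp : nat -> R -> R -> R) : Prop :=
  forall j, (1 <= j <= N)%nat ->
    (forall t p, 0 < t < T -> is_derive (fun s => v j s p) t (vt j t p)) /\
    (forall t p, 0 <= t < T ->
       is_derive (fun q => v j t q) p (vp j t p) /\
       is_derive (fun q => vp j t q) p (vpp j t p)) /\
    (forall t p, 0 <= t <= T ->
       cont_within (fun z => 0 <= fst z <= T) (v j) t p) /\
    (forall t p, 0 <= t < T ->
       cont_within (fun z => 0 <= fst z < T) (vp j) t p /\
       cont_within (fun z => 0 <= fst z < T) (vpp j) t p) /\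
    (forall t p, 0 < t < T ->
       cont_within (fun _ => True) (vt j) t p) /\
    (forall t p, 0 < t < T ->
       0 = vt j t p + / 2 * sigma ^ 2 * vpp j t p
           + lam * agg_speed lam kappa N vp t p * vp j t p
           - kappa * speed lam kappa N vp j t p * agg_speed lam kappa N vp t p) /\
    (forall p, v j T p = H j p) /\
    (exists M, forall t p, 0 <= t <= T ->
       Rabs (v j t p) <= M /\ (t < T -> Rabs (vp j t p) <= M)).

(* Summing the N value functions, W := v^1 + ... + v^N solves the single equation
   W_t + sigma^2/2 W_pp + c_N (W_p)^2 = 0 with W(T, .) = H^1, while the aggregate speed
   is lam / (kappa (N + 1)) W_p.  For fixed h the increment W(t, . + h) - W(t, .) solves a
   linear parabolic equation with bounded drift, so by the maximum principle it never
   exceeds its terminal size sup |H^1'| |h|.  Hence |W_p| <= sup |H^1'| uniformly in N,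
   and the aggregate speed is O(1/N). *)

From Stdlib Require Import Reals Lra Lia Psatz ClassicalEpsilon.
From Coquelicot Require Import Coquelicot.
Open Scope R_scope.

Lemma is_derive_right_max_le0 (f : R -> R) x l eta :
  is_derive f x l -> 0 < eta ->
  (forall s, x <= s <= x + eta -> f s <= f x) -> l <= 0.
Proof.
  intros Hd Heta Hmax. apply is_derive_Reals in Hd.
  destruct (Rle_or_lt l 0) as [Hl | Hl]; [exact Hl | exfalso].
  destruct (Hd l Hl) as [del Hdel].
  set (h := Rmin del eta / 2).
  assert (Hmin : 0 < Rmin del eta) by (apply Rmin_glb_lt; [apply cond_pos | lra]).
  pose proof (Rmin_l del eta). pose proof (Rmin_r del eta).
  assert (Hh : 0 < h) by (unfold h; lra).
  specialize (Hdel h ltac:(lra) ltac:(rewrite Rabs_right; unfold h; lra)).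
  specialize (Hmax (x + h) ltac:(unfold h; lra)).
  assert ((f (x + h) - f x) / h <= 0).
  { apply Rmult_le_0_r; [lra | apply Rlt_le, Rinv_0_lt_compat; lra]. }
  apply Rabs_def2 in Hdel. lra.
Qed.

Lemma is_derive_max_eq0 (f : R -> R) x l :
  is_derive f x l -> (forall s, f s <= f x) -> l = 0.
Proof.
  intros Hd Hmax. apply is_derive_Reals in Hd.
  change l with (derive_pt f x (exist _ l Hd)).
  apply (deriv_maximum f (x - 1) (x + 1)); [lra | lra | intros; apply Hmax].
Qed.

Lemma is_derive2_max_le0 (f f' : R -> R) x l :
  (forall y, is_derive f y (f' y)) -> is_derive f' x l ->
  (forall s, f s <= f x) -> l <= 0.
Proof.
  intros Hd Hd2 Hmax.
  pose proof (is_derive_max_eq0 f x (f' x) (Hd x) Hmax) as Hf'x.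
  destruct (Rle_or_lt l 0) as [Hl | Hl]; [exact Hl | exfalso].
  apply is_derive_Reals in Hd2.
  destruct (Hd2 l Hl) as [del Hdel].
  set (h := del / 2).
  assert (Hh : 0 < h) by (unfold h; pose proof (cond_pos del); lra).
  (* [f'] vanishes at [x] and increases there, so [f] increases right of [x] *)
  assert (Hpos : forall c, x < c < x + h -> 0 < f' c).
  { intros c Hc.
    specialize (Hdel (c - x) ltac:(apply Rgt_not_eq; lra)
                  ltac:(rewrite Rabs_right; unfold h in *; lra)).
    replace (x + (c - x)) with c in Hdel by ring.
    rewrite Hf'x, Rminus_0_r in Hdel. apply Rabs_def2 in Hdel.
    destruct (Rle_or_lt (f' c) 0) as [Hc' | Hc']; [exfalso | exact Hc'].
    assert (f' c / (c - x) <= 0).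
    { apply Rmult_le_0_r; [exact Hc' | apply Rlt_le, Rinv_0_lt_compat; lra]. }
    lra. }
  destruct (MVT_cor2 f f' x (x + h)) as (c & Hc & Hcx); [lra | |].
  { intros c _. apply is_derive_Reals, Hd. }
  specialize (Hpos c Hcx). specialize (Hmax (x + h)).
  assert (0 < f' c * (x + h - x)) by (apply Rmult_lt_0_compat; lra).
  lra.
Qed.

Lemma is_derive_abs_le_of_lipschitz (f : R -> R) x l L :
  is_derive f x l -> (forall h, Rabs (f (x + h) - f x) <= L * Rabs h) ->
  Rabs l <= L.
Proof.
  intros Hd Hlip. apply is_derive_Reals in Hd.
  destruct (Rle_or_lt (Rabs l) L) as [Hl | Hl]; [exact Hl | exfalso].
  destruct (Hd (Rabs l - L) ltac:(lra)) as [del Hdel].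
  set (h := del / 2).
  pose proof (cond_pos del).
  assert (Hh : 0 < h) by (unfold h; lra).
  specialize (Hdel h ltac:(lra) ltac:(rewrite Rabs_right; unfold h; lra)).
  specialize (Hlip h). rewrite (Rabs_right h) in Hlip by lra.
  assert (Rabs ((f (x + h) - f x) / h) <= L).
  { unfold Rdiv. rewrite Rabs_mult, Rabs_inv, (Rabs_right h) by lra.
    apply (Rmult_le_reg_r h); [lra |].
    rewrite Rmult_assoc, Rinv_l by lra. lra. }
  rewrite Rabs_minus_sym in Hdel.
  pose proof (Rabs_triang_inv l ((f (x + h) - f x) / h)). lra.
Qed.

Lemma lipschitz_of_derive_bound (f f' : R -> R) L :
  (forall x, is_derive f x (f' x)) -> (forall x, Rabs (f' x) <= L) ->
  forall x y, Rabs (f y - f x) <= L * Rabs (y - x).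
Proof.
  intros Hd HL x y.
  destruct (MVT_abs f f' x y) as (c & Hc & _).
  { intros c _. apply is_derive_Reals, Hd. }
  rewrite Hc. apply Rmult_le_compat_r; [apply Rabs_pos | apply HL].
Qed.

Lemma is_derive_shift (f : R -> R) h x l :
  is_derive f (x + h) l -> is_derive (fun y => f (y + h)) x l.
Proof.
  intros Hf. replace l with (1 * l) by ring.
  apply (is_derive_comp f (fun y => y + h)); [exact Hf |].
  auto_derive; [exact I | ring].
Qed.

Lemma cont_within_eps D f t p : cont_within D f t p ->
  forall eps, 0 < eps -> exists del, 0 < del /\ forall u v, D (u, v) ->
    Rabs (u - t) < del -> Rabs (v - p) < del -> Rabs (f u v - f t p) < eps.
Proof.
  intros Hc eps Heps.
  destruct (Hc _ (locally_ball (f t p) (mkposreal eps Heps))) as [del Hdel].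
  exists del. split; [apply cond_pos |].
  intros u v HD Hu Hv. apply (Hdel (u, v)); [split; assumption | exact HD].
Qed.

Lemma continuity_2d_pt_section (F : R -> R -> R) u v :
  continuity_2d_pt F u v -> continuity_pt (F u) v.
Proof.
  intros Hc eps Heps. destruct (Hc (mkposreal eps Heps)) as [del Hdel].
  exists del. split; [apply cond_pos |]. intros x [_ Hx].
  apply Hdel; [rewrite Rminus_eq_0, Rabs_R0; apply cond_pos | exact Hx].
Qed.

Definition clamp (a b u : R) : R := Rmax a (Rmin b u).

Lemma clamp_in a b u : a <= b -> a <= clamp a b u <= b.
Proof. intros; unfold clamp, Rmax, Rmin; repeat destruct Rle_dec; lra. Qed.

Lemma clamp_id a b u : a <= u <= b -> clamp a b u = u.
Proof. intros; unfold clamp, Rmax, Rmin; repeat destruct Rle_dec; lra. Qed.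

Lemma clamp_lipschitz a b u v : a <= b -> Rabs (clamp a b u - clamp a b v) <= Rabs (u - v).
Proof. intros; unfold clamp, Rmax, Rmin; repeat destruct Rle_dec; split_Rabs; lra. Qed.

Lemma section_argmax (F : R -> R -> R) c d :
  c <= d -> (forall u v, continuity_2d_pt F u v) ->
  exists pm : R -> R, forall u,
    c <= pm u <= d /\ forall v, c <= v <= d -> F u v <= F u (pm u).
Proof.
  intros Hcd Hc.
  apply (choice (fun u y => c <= y <= d /\ forall v, c <= v <= d -> F u v <= F u y)).
  intros u.
  destruct (continuity_ab_maj (F u) c d Hcd) as (y & Hy & Hyin).
  { intros v _. apply continuity_2d_pt_section, Hc. }
  exists y. split; [exact Hyin | exact Hy].
Qed.

Lemma section_max_continuous (F : R -> R -> R) pm a b c d :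
  a <= b -> (forall u v, continuity_2d_pt F u v) ->
  (forall u, c <= pm u <= d /\ forall v, c <= v <= d -> F u v <= F u (pm u)) ->
  forall u, continuity_pt (fun u => F (clamp a b u) (pm (clamp a b u))) u.
Proof.
  intros Hab Hc Hpm u eps Heps.
  destruct (uniform_continuity_2d F a b c d (fun x y _ _ => Hc x y)
              (mkposreal eps Heps)) as [del Hdel].
  exists del. split; [apply cond_pos |]. intros u' [_ Hu']. simpl in *. unfold R_dist in *.
  set (U := clamp a b u). set (U' := clamp a b u').
  assert (HU : a <= U <= b) by apply clamp_in, Hab.
  assert (HU' : a <= U' <= b) by apply clamp_in, Hab.
  assert (HUU' : Rabs (U' - U) < del).
  { pose proof (clamp_lipschitz a b u' u Hab). unfold U, U'. lra. }
  destruct (Hpm U) as [HpU HmU]. destruct (Hpm U') as [HpU' HmU'].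
  (* the maximum over the section moves by less than [eps] either way *)
  assert (E1 : Rabs (F U' (pm U) - F U (pm U)) < eps).
  { apply (Hdel U (pm U) U' (pm U)); auto.
    rewrite Rminus_eq_0, Rabs_R0. apply cond_pos. }
  assert (E2 : Rabs (F U (pm U') - F U' (pm U')) < eps).
  { apply (Hdel U' (pm U') U (pm U')); auto.
    - rewrite Rabs_minus_sym. exact HUU'.
    - rewrite Rminus_eq_0, Rabs_R0. apply cond_pos. }
  pose proof (HmU' (pm U) HpU). pose proof (HmU (pm U') HpU').
  apply Rabs_def2 in E1. apply Rabs_def2 in E2. apply Rabs_def1; lra.
Qed.

Lemma rectangle_max (F : R -> R -> R) a b c d :
  a <= b -> c <= d -> (forall u v, continuity_2d_pt F u v) ->
  exists x y, a <= x <= b /\ c <= y <= d /\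
    forall u v, a <= u <= b -> c <= v <= d -> F u v <= F x y.
Proof.
  intros Hab Hcd Hc.
  destruct (section_argmax F c d Hcd Hc) as [pm Hpm].
  destruct (continuity_ab_maj _ a b Hab
              (fun u _ => section_max_continuous F pm a b c d Hab Hc Hpm u))
    as (x & Hx & Hxin).
  exists x, (pm x). split; [exact Hxin |]. split; [apply Hpm |].
  intros u v Hu Hv. specialize (Hx u Hu). rewrite !clamp_id in Hx by assumption.
  pose proof (proj2 (Hpm u) v Hv). lra.
Qed.

(* Continuity on the closed strip [a, b] x R, encoded as the restriction of a function
   continuous on the whole plane: [continuity_2d_pt] has no relative version. *)
Definition strip_continuous (a b : R) (f : R -> R -> R) : Prop :=
  exists fc : R -> R -> R, (forall u v, continuity_2d_pt fc u v) /\
    forall u v, a <= u <= b -> fc u v = f u v.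

Lemma strip_continuous_of_cont_within T f :
  0 <= T ->
  (forall t p, 0 <= t <= T -> cont_within (fun z => 0 <= fst z <= T) f t p) ->
  strip_continuous 0 T f.
Proof.
  intros HT Hc. exists (fun u v => f (clamp 0 T u) v). split.
  - intros u v eps.
    destruct (cont_within_eps _ _ _ _ (Hc _ v (clamp_in 0 T u HT)) eps (cond_pos eps))
      as (del & Hdel & Hf).
    exists (mkposreal del Hdel). intros u' v' Hu' Hv'. apply Hf.
    + apply clamp_in, HT.
    + pose proof (clamp_lipschitz 0 T u' u HT). simpl in Hu'. lra.
    + exact Hv'.
  - intros u v Hu. rewrite clamp_id by exact Hu. reflexivity.
Qed.

Lemma strip_continuous_mono a b a' b' f :
  a <= a' -> b' <= b -> strip_continuous a b f -> strip_continuous a' b' f.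
Proof.
  intros Ha Hb (fc & Hfc & Hfcf). exists fc. split; [exact Hfc |].
  intros u v Hu. apply Hfcf. lra.
Qed.

Lemma strip_continuous_global a b f :
  (forall u v, continuity_2d_pt f u v) -> strip_continuous a b f.
Proof. intros Hf. exists f. split; [exact Hf | reflexivity]. Qed.

Lemma strip_continuous_minus a b f g :
  strip_continuous a b f -> strip_continuous a b g ->
  strip_continuous a b (fun u v => f u v - g u v).
Proof.
  intros (fc & Hfc & Hfcf) (gc & Hgc & Hgcg).
  exists (fun u v => fc u v - gc u v). split.
  - intros u v. apply continuity_2d_pt_minus; [apply Hfc | apply Hgc].
  - intros u v Hu. rewrite Hfcf, Hgcg by exact Hu. reflexivity.
Qed.

Lemma strip_continuous_shift a b f h :
  strip_continuous a b f -> strip_continuous a b (fun u v => f u (v + h)).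
Proof.
  intros (fc & Hfc & Hfcf). exists (fun u v => fc u (v + h)). split.
  - intros u v eps. destruct (Hfc u (v + h) eps) as [del Hdel].
    exists del. intros u' v' Hu' Hv'. apply Hdel; [exact Hu' |].
    replace (v' + h - (v + h)) with (v' - v) by ring. exact Hv'.
  - intros u v Hu. apply Hfcf, Hu.
Qed.

Lemma strip_max (F : R -> R -> R) a b p0 r :
  a <= b -> strip_continuous a b F ->
  (forall u v, a <= u <= b -> r < Rabs v -> F u v < 0) -> 0 <= F a p0 ->
  exists ts ps, a <= ts <= b /\ forall u v, a <= u <= b -> F u v <= F ts ps.
Proof.
  intros Hab (Fc & HFc & HFcF) Hfar Hp0.
  assert (Hp0r : Rabs p0 <= r).
  { destruct (Rle_or_lt (Rabs p0) r) as [H | H]; [exact H |].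
    specialize (Hfar a p0 ltac:(lra) H). lra. }
  pose proof (Rabs_pos p0).
  destruct (rectangle_max Fc a b (- r) r Hab ltac:(lra) HFc)
    as (ts & ps & Hts & Hps & Hmax).
  exists ts, ps. split; [exact Hts |].
  assert (Hin : forall u v, a <= u <= b -> Rabs v <= r -> F u v <= F ts ps).
  { intros u v Hu Hv. rewrite <- (HFcF u v Hu), <- (HFcF ts ps Hts).
    apply Hmax; [exact Hu | apply Rabs_le_between, Hv]. }
  intros u v Hu. destruct (Rle_or_lt (Rabs v) r) as [Hv | Hv]; [apply Hin; assumption |].
  pose proof (Hin a p0 ltac:(lra) Hp0r). pose proof (Hfar u v Hu Hv). lra.
Qed.

Lemma strip_bound_left_end (f : R -> R -> R) a b C :
  a < b -> strip_continuous a b f ->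
  (forall u v, a < u <= b -> Rabs (f u v) <= C) -> forall v, Rabs (f a v) <= C.
Proof.
  intros Hab (fc & Hfc & Hfcf) Hbound v.
  destruct (Rle_or_lt (Rabs (f a v)) C) as [H | H]; [exact H | exfalso].
  destruct (Hfc a v (mkposreal _ (proj2 (Rlt_0_minus _ _) H))) as [del Hdel].
  pose proof (cond_pos del). pose proof (Rmin_l del (b - a)). pose proof (Rmin_r del (b - a)).
  assert (Hmin : 0 < Rmin del (b - a)) by (apply Rmin_glb_lt; lra).
  set (s := a + Rmin del (b - a) / 2).
  specialize (Hdel s v ltac:(rewrite Rabs_right; unfold s; lra)
                 ltac:(rewrite Rminus_eq_0, Rabs_R0; lra)).
  simpl in Hdel. rewrite !Hfcf in Hdel by (unfold s; lra).
  specialize (Hbound s v ltac:(unfold s; lra)).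
  rewrite Rabs_minus_sym in Hdel. pose proof (Rabs_triang_inv (f a v) (f s v)). lra.
Qed.

Definition penalty (K T u v : R) : R := exp (K * (T - u)) * (1 + v * v).

Lemma penalty_pos K T u v : 0 < penalty K T u v.
Proof. apply Rmult_lt_0_compat; [apply exp_pos | nra]. Qed.

Lemma penalty_ge K T u v : 0 <= K -> u <= T -> 1 + v * v <= penalty K T u v.
Proof.
  intros HK Hu. unfold penalty.
  assert (0 <= K * (T - u)) by (apply Rmult_le_pos; lra).
  pose proof (exp_ineq1_le (K * (T - u))). nra.
Qed.

Lemma penalty_continuous K T u v : continuity_2d_pt (penalty K T) u v.
Proof.
  apply continuity_2d_pt_mult.
  - apply (continuity_1d_2d_pt_comp exp (fun u _ => K * (T - u))).
    + apply derivable_continuous_pt, derivable_pt_exp.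
    + apply continuity_2d_pt_mult; [apply continuity_2d_pt_const |].
      apply continuity_2d_pt_minus; [apply continuity_2d_pt_const | apply continuity_2d_pt_id1].
  - apply continuity_2d_pt_plus; [apply continuity_2d_pt_const |].
    apply continuity_2d_pt_mult; apply continuity_2d_pt_id2.
Qed.

Lemma quadratic_drift_bound a B b x :
  0 <= a -> Rabs b <= B -> 2 * a + 2 * b * x < (2 * a + B + 1) * (1 + x * x).
Proof.
  intros Ha Hb.
  assert (2 * b * x <= B * (1 + x * x)).
  { assert (b * x <= Rabs b * Rabs x) by (rewrite <- Rabs_mult; apply Rle_abs).
    assert (2 * Rabs x <= 1 + x * x).
    { pose proof (Rsqr_abs x) as Hsq. pose proof (Rle_0_sqr (Rabs x - 1)).
      unfold Rsqr in *. lra. }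
    pose proof (Rabs_pos b). pose proof (Rabs_pos x). nra. }
  nra.
Qed.

Lemma penalty_dominates K T M del eps u v x :
  0 <= K -> u <= T -> 0 < eps -> Rabs x <= M -> (M + Rabs del) / eps + 1 < Rabs v ->
  x < del + eps * penalty K T u v.
Proof.
  intros HK Hu Heps Hx Hv.
  pose proof (penalty_ge K T u v HK Hu).
  assert (HMe : eps * ((M + Rabs del) / eps) = M + Rabs del) by (field; lra).
  assert (0 <= (M + Rabs del) / eps).
  { pose proof (Rabs_pos x). pose proof (Rabs_pos del). apply Rdiv_le_0_compat; lra. }
  assert (Rabs v < v * v) by (pose proof (Rsqr_abs v) as Hsq; unfold Rsqr in Hsq; nra).
  pose proof (Rle_abs x). pose proof (Rle_abs (- del)). rewrite Rabs_Ropp in *. nra.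
Qed.

Lemma penalty_is_derive K T c e u v :
  is_derive (fun s => c + e * penalty K T s v) u
    (e * (- K * exp (K * (T - u)) * (1 + v * v))) /\
  is_derive (fun q => c + e * penalty K T u q) v (e * (exp (K * (T - u)) * (2 * v))) /\
  is_derive (fun q => e * (exp (K * (T - u)) * (2 * q))) v (e * (exp (K * (T - u)) * 2)).
Proof.
  unfold penalty. split; [| split]; auto_derive; try exact I; unfold Rminus; ring.
Qed.

Lemma parabolic_max_point (z : R -> R -> R) zt zp zpp ts ps eta :
  0 < eta ->
  is_derive (fun s => z s ps) ts zt ->
  (forall q, is_derive (fun q => z ts q) q (zp q)) ->
  is_derive zp ps zpp ->
  (forall s, ts <= s <= ts + eta -> z s ps <= z ts ps) ->
  (forall q, z ts q <= z ts ps) ->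
  zt <= 0 /\ zp ps = 0 /\ zpp <= 0.
Proof.
  intros Heta Ht Hp Hpp Hmaxt Hmaxp. split; [| split].
  - exact (is_derive_right_max_le0 _ _ _ _ Ht Heta Hmaxt).
  - exact (is_derive_max_eq0 _ _ _ (Hp ps) Hmaxp).
  - exact (is_derive2_max_le0 _ _ _ _ Hp Hpp Hmaxp).
Qed.

Lemma strict_max_principle (T t0 a r : R) (z zt zp zpp b : R -> R -> R) :
  0 <= a -> t0 <= T -> strip_continuous t0 T z ->
  (forall t p, t0 <= t < T -> is_derive (fun s => z s p) t (zt t p)) ->
  (forall t p, t0 <= t < T -> is_derive (fun q => z t q) p (zp t p)) ->
  (forall t p, t0 <= t < T -> is_derive (fun q => zp t q) p (zpp t p)) ->
  (forall t p, t0 <= t < T -> 0 < zt t p + a * zpp t p + b t p * zp t p) ->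
  (forall u v, t0 <= u <= T -> r < Rabs v -> z u v < 0) ->
  (forall p, z T p < 0) ->
  forall p, z t0 p < 0.
Proof.
  intros Ha Ht0 Hcont Hzt Hzp Hzpp Hsub Hfar Hter p0.
  destruct (Rlt_or_le (z t0 p0) 0) as [Hlt | Hge]; [exact Hlt | exfalso].
  destruct (strip_max z t0 T p0 r Ht0 Hcont Hfar Hge) as (ts & ps & Hts & Hmax).
  assert (HtsT : ts < T).
  { destruct (Rle_lt_or_eq_dec ts T) as [Hlt | E]; [lra | exact Hlt |].
    subst ts. specialize (Hmax t0 p0 ltac:(lra)). specialize (Hter ps). lra. }
  destruct (parabolic_max_point z (zt ts ps) (zp ts) (zpp ts ps) ts ps (T - ts) ltac:(lra)
              (Hzt ts ps ltac:(lra)) (fun q => Hzp ts q ltac:(lra)) (Hzpp ts ps ltac:(lra))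
              ltac:(intros s Hs; apply Hmax; lra) ltac:(intros q; apply Hmax; lra))
    as (Zt & Zp & Zpp).
  specialize (Hsub ts ps ltac:(lra)). rewrite Zp in Hsub. nra.
Qed.

Lemma max_principle (T t1 a B M del : R) (d dt dp dpp b : R -> R -> R) :
  0 < a -> 0 <= B -> strip_continuous t1 T d ->
  (forall t p, t1 <= t < T -> is_derive (fun s => d s p) t (dt t p)) ->
  (forall t p, t1 <= t < T -> is_derive (fun q => d t q) p (dp t p)) ->
  (forall t p, t1 <= t < T -> is_derive (fun q => dp t q) p (dpp t p)) ->
  (forall t p, t1 <= t <= T -> Rabs (d t p) <= M) ->
  (forall t p, t1 <= t < T -> Rabs (b t p) <= B) ->
  (forall t p, t1 <= t < T -> dt t p + a * dpp t p + b t p * dp t p = 0) ->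
  (forall p, d T p <= del) ->
  forall t p, t1 <= t <= T -> d t p <= del.
Proof.
  intros Ha HB Hcont Hdt Hdp Hdpp HM Hb Hpde Hter t0 p0 Ht0.
  destruct (Rle_or_lt (d t0 p0) del) as [Hle | Hgt]; [exact Hle | exfalso].
  set (K := 2 * a + B + 1).
  pose proof (penalty_pos K T t0 p0).
  set (eps := (d t0 p0 - del) / (2 * penalty K T t0 p0)).
  assert (Heps : 0 < eps) by (apply Rdiv_lt_0_compat; lra).
  set (z := fun u v => d u v - (del + eps * penalty K T u v)).
  assert (Hz0 : z t0 p0 = (d t0 p0 - del) / 2) by (unfold z, eps; field; lra).
  enough (z t0 p0 < 0) by lra.
  (* [eps * penalty] is a strict supersolution, so [z] is a strict subsolution *)
  apply (strict_max_principle T t0 a ((M + Rabs del) / eps + 1) z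
           (fun t p => dt t p - eps * (- K * exp (K * (T - t)) * (1 + p * p)))
           (fun t p => dp t p - eps * (exp (K * (T - t)) * (2 * p)))
           (fun t p => dpp t p - eps * (exp (K * (T - t)) * 2)) b); try lra.
  - apply strip_continuous_minus.
    + apply (strip_continuous_mono t1 T); [lra | lra | exact Hcont].
    + apply strip_continuous_global. intros u v.
      apply continuity_2d_pt_plus; [apply continuity_2d_pt_const |].
      apply continuity_2d_pt_mult; [apply continuity_2d_pt_const | apply penalty_continuous].
  - intros t p Ht. exact (is_derive_minus _ _ _ _ _ (Hdt t p ltac:(lra))
                            (proj1 (penalty_is_derive K T del eps t p))).
  - intros t p Ht. exact (is_derive_minus _ _ _ _ _ (Hdp t p ltac:(lra))
                            (proj1 (proj2 (penalty_is_derive K T del eps t p)))).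
  - intros t p Ht. exact (is_derive_minus _ _ _ _ _ (Hdpp t p ltac:(lra))
                            (proj2 (proj2 (penalty_is_derive K T del eps t p)))).
  - intros t p Ht. pose proof (Hpde t p ltac:(lra)).
    pose proof (quadratic_drift_bound a B (b t p) p ltac:(lra) (Hb t p ltac:(lra))).
    pose proof (exp_pos (K * (T - t))).
    assert (0 < eps * exp (K * (T - t)) * (K * (1 + p * p) - 2 * a - 2 * b t p * p)).
    { apply Rmult_lt_0_compat; [apply Rmult_lt_0_compat |]; unfold K in *; lra. }
    nra.
  - intros u v Hu Hv. unfold z.
    pose proof (penalty_dominates K T M del eps u v (d u v) ltac:(unfold K; lra)
                  ltac:(lra) Heps (HM u v ltac:(lra)) Hv). lra.
  - intros p. specialize (Hter p). pose proof (penalty_pos K T T p).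
    assert (0 < eps * penalty K T T p) by (apply Rmult_lt_0_compat; lra).
    unfold z. lra.
Qed.

Lemma max_principle_abs (T t1 a B M del : R) (d dt dp dpp b : R -> R -> R) :
  0 < a -> 0 <= B -> strip_continuous t1 T d ->
  (forall t p, t1 <= t < T -> is_derive (fun s => d s p) t (dt t p)) ->
  (forall t p, t1 <= t < T -> is_derive (fun q => d t q) p (dp t p)) ->
  (forall t p, t1 <= t < T -> is_derive (fun q => dp t q) p (dpp t p)) ->
  (forall t p, t1 <= t <= T -> Rabs (d t p) <= M) ->
  (forall t p, t1 <= t < T -> Rabs (b t p) <= B) ->
  (forall t p, t1 <= t < T -> dt t p + a * dpp t p + b t p * dp t p = 0) ->
  (forall p, Rabs (d T p) <= del) ->
  forall t p, t1 <= t <= T -> Rabs (d t p) <= del.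
Proof.
  intros Ha HB Hcont Hdt Hdp Hdpp HM Hb Hpde Hter t p Ht.
  apply Rabs_le. split.
  - enough (- d t p <= del) by lra.
    apply (max_principle T t1 a B M del (fun t p => - d t p) (fun t p => - dt t p)
             (fun t p => - dp t p) (fun t p => - dpp t p) b); try assumption.
    + destruct Hcont as (dc & Hdc & Hdcd). exists (fun u v => - dc u v). split.
      * intros u v. apply continuity_2d_pt_opp, Hdc.
      * intros u v Hu. rewrite Hdcd by exact Hu. reflexivity.
    + intros; apply (@is_derive_opp R_AbsRing R_NormedModule); auto.
    + intros; apply (@is_derive_opp R_AbsRing R_NormedModule); auto.
    + intros; apply (@is_derive_opp R_AbsRing R_NormedModule); auto.
    + intros; rewrite Rabs_Ropp; auto.
    + intros s q Hs. specialize (Hpde s q Hs). lra.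
    + intros q. specialize (Hter q). apply Rabs_le_between in Hter. lra.
  - apply (max_principle T t1 a B M del d dt dp dpp b); try assumption.
    intros q. specialize (Hter q). apply Rabs_le_between in Hter. lra.
Qed.

Lemma psum_0 f : psum 0 f = 0.
Proof. unfold psum. rewrite sum_n_m_zero; [reflexivity | lia]. Qed.

Lemma psum_S N f : psum (S N) f = psum N f + f (S N).
Proof. unfold psum. rewrite sum_n_Sm; [reflexivity | lia]. Qed.

Lemma psum_ext N f g : (forall i, (1 <= i <= N)%nat -> f i = g i) -> psum N f = psum N g.
Proof. intros H. apply sum_n_m_ext_loc. exact H. Qed.

Lemma psum_plus N f g : psum N (fun i => f i + g i) = psum N f + psum N g.
Proof. induction N; [rewrite !psum_0; ring | rewrite !psum_S, IHN; ring]. Qed.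

Lemma psum_minus N f g : psum N (fun i => f i - g i) = psum N f - psum N g.
Proof. induction N; [rewrite !psum_0; ring | rewrite !psum_S, IHN; ring]. Qed.

Lemma psum_scal_l N c f : psum N (fun i => c * f i) = c * psum N f.
Proof. induction N; [rewrite !psum_0; ring | rewrite !psum_S, IHN; ring]. Qed.

Lemma psum_scal_r N c f : psum N (fun i => f i * c) = psum N f * c.
Proof. induction N; [rewrite !psum_0; ring | rewrite !psum_S, IHN; ring]. Qed.

Lemma psum_const N c : psum N (fun _ => c) = INR N * c.
Proof. induction N; [rewrite psum_0; simpl; ring | rewrite psum_S, IHN, S_INR; ring]. Qed.

Lemma psum_bounded N (f : nat -> R -> R -> R) (P : R -> Prop) :
  (forall i, (1 <= i <= N)%nat -> exists M, forall t q, P t -> Rabs (f i t q) <= M) ->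
  exists M, forall t q, P t -> Rabs (psum N (fun i => f i t q)) <= M.
Proof.
  induction N as [| N IHN]; intros Hf.
  - exists 0. intros t q _. rewrite psum_0, Rabs_R0. lra.
  - destruct IHN as [M1 HM1]; [intros i Hi; apply Hf; lia |].
    destruct (Hf (S N) ltac:(lia)) as [M2 HM2].
    exists (M1 + M2). intros t q Ht. rewrite psum_S.
    specialize (HM1 t q Ht). specialize (HM2 t q Ht).
    pose proof (Rabs_triang (psum N (fun i => f i t q)) (f (S N) t q)). lra.
Qed.

Lemma psum_is_derive N (f : nat -> R -> R) (df : nat -> R) x :
  (forall i, (1 <= i <= N)%nat -> is_derive (f i) x (df i)) ->
  is_derive (fun s => psum N (fun i => f i s)) x (psum N df).
Proof.
  induction N as [| N IHN]; intros Hf.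
  - rewrite psum_0. apply (is_derive_ext (fun _ => 0)).
    + intros s. rewrite psum_0. reflexivity.
    + apply (@is_derive_const R_AbsRing R_NormedModule).
  - rewrite psum_S. apply (is_derive_ext (fun s => psum N (fun i => f i s) + f (S N) s)).
    + intros s. rewrite psum_S. reflexivity.
    + apply (@is_derive_plus R_AbsRing R_NormedModule).
      * apply IHN. intros i Hi. apply Hf. lia.
      * apply Hf. lia.
Qed.

Lemma strip_continuous_psum a b N (f : nat -> R -> R -> R) :
  (forall i, (1 <= i <= N)%nat -> strip_continuous a b (f i)) ->
  strip_continuous a b (fun u v => psum N (fun i => f i u v)).
Proof.
  induction N as [| N IHN]; intros Hf.
  - apply strip_continuous_global. intros u v.
    apply (continuity_2d_pt_ext (fun _ _ => 0)); [intros; rewrite psum_0; reflexivity |].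
    apply continuity_2d_pt_const.
  - destruct IHN as (gc & Hgc & Hgcg); [intros i Hi; apply Hf; lia |].
    destruct (Hf (S N) ltac:(lia)) as (fc & Hfc & Hfcf).
    exists (fun u v => gc u v + fc u v). split.
    + intros u v. apply continuity_2d_pt_plus; [apply Hgc | apply Hfc].
    + intros u v Hu. rewrite psum_S, Hgcg, Hfcf by exact Hu. reflexivity.
Qed.

Lemma psum_claims N (H1 : R -> R) q :
  (1 <= N)%nat -> psum N (fun i => claims H1 i q) = H1 q.
Proof.
  induction N as [| N IHN]; intros HN; [lia |].
  rewrite psum_S. destruct N as [| N].
  - rewrite psum_0. unfold claims. simpl. ring.
  - rewrite IHN by lia. unfold claims. simpl. ring.
Qed.

Lemma agg_speed_eq lam kappa N vp t p :
  0 < kappa ->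
  agg_speed lam kappa N vp t p = lam / kappa / INR (N + 1) * psum N (fun i => vp i t p).
Proof.
  intros Hk. unfold agg_speed, speed.
  rewrite psum_scal_l, psum_minus, psum_const, plus_INR.
  simpl INR. pose proof (pos_INR N). field. lra.
Qed.

Section SummedValue.

Variables (T sigma lam kappa L : R) (H1 : R -> R) (N : nat)
  (v vt vp vpp : nat -> R -> R -> R).
Hypotheses (HT : 0 < T) (Hsigma : 0 < sigma) (Hkappa : 0 < kappa) (HN : (1 <= N)%nat)
  (HL : forall x y, Rabs (H1 y - H1 x) <= L * Rabs (y - x))
  (Hsol : classical_solution T sigma lam kappa N (claims H1) v vt vp vpp).

Let W (t q : R) : R := psum N (fun i => v i t q).
Let Wt (t q : R) : R := psum N (fun i => vt i t q).
Let Wp (t q : R) : R := psum N (fun i => vp i t q).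
Let Wpp (t q : R) : R := psum N (fun i => vpp i t q).
Let alpha : R := lam / kappa / INR (N + 1).
Let c : R := lam * alpha - kappa * (alpha * alpha).

Lemma summed_value_derive_t t q : 0 < t < T -> is_derive (fun s => W s q) t (Wt t q).
Proof.
  intros Ht. apply psum_is_derive. intros i Hi.
  destruct (Hsol i Hi) as (Hvt & _). exact (Hvt t q Ht).
Qed.

Lemma summed_value_derive_p t q : 0 <= t < T ->
  is_derive (fun r => W t r) q (Wp t q) /\ is_derive (fun r => Wp t r) q (Wpp t q).
Proof.
  intros Ht. split; apply psum_is_derive; intros i Hi;
    destruct (Hsol i Hi) as (_ & Hvp & _); apply (Hvp t q Ht).
Qed.

Lemma summed_value_terminal q : W T q = H1 q.
Proof.
  rewrite <- (psum_claims N H1 q HN). apply psum_ext. intros i Hi.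
  destruct (Hsol i Hi) as (_ & _ & _ & _ & _ & _ & Hter & _). apply Hter.
Qed.

Lemma summed_value_bounded : exists M, forall t q, 0 <= t <= T ->
  Rabs (W t q) <= M /\ (t < T -> Rabs (Wp t q) <= M).
Proof.
  destruct (psum_bounded N v (fun t => 0 <= t <= T)) as [M1 HM1].
  { intros i Hi. destruct (Hsol i Hi) as (_ & _ & _ & _ & _ & _ & _ & M & HM).
    exists M. intros t q Ht. apply (HM t q Ht). }
  destruct (psum_bounded N vp (fun t => 0 <= t < T)) as [M2 HM2].
  { intros i Hi. destruct (Hsol i Hi) as (_ & _ & _ & _ & _ & _ & _ & M & HM).
    exists M. intros t q Ht. apply (HM t q); lra. }
  exists (Rmax M1 M2). intros t q Ht. split.
  - eapply Rle_trans; [apply (HM1 t q Ht) | apply Rmax_l].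
  - intros HtT. eapply Rle_trans; [apply (HM2 t q ltac:(lra)) | apply Rmax_r].
Qed.

Lemma summed_value_strip_continuous : strip_continuous 0 T W.
Proof.
  apply strip_continuous_psum. intros i Hi.
  destruct (Hsol i Hi) as (_ & _ & Hvc & _).
  apply strip_continuous_of_cont_within; [lra | exact Hvc].
Qed.

(* Summing the N equations, the drift and cost terms combine into [c (W_p)^2]. *)
Lemma summed_value_pde t q : 0 < t < T ->
  Wt t q + / 2 * sigma ^ 2 * Wpp t q + c * (Wp t q * Wp t q) = 0.
Proof.
  intros Ht.
  set (A := agg_speed lam kappa N vp t q).
  assert (HA : A = alpha * Wp t q) by apply agg_speed_eq, Hkappa.
  assert (Hsum : psum N (fun j => vt j t q + / 2 * sigma ^ 2 * vpp j t q
        + lam * A * vp j t q - kappa * speed lam kappa N vp j t q * A) = 0).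
  { rewrite <- (Rmult_0_r (INR N)), <- psum_const. apply psum_ext. intros j Hj.
    destruct (Hsol j Hj) as (_ & _ & _ & _ & _ & Hpde & _). symmetry. apply Hpde, Ht. }
  rewrite psum_minus, !psum_plus, !psum_scal_l, psum_scal_r, psum_scal_l in Hsum.
  change (psum N (fun j => speed lam kappa N vp j t q)) with A in Hsum.
  rewrite HA in Hsum. unfold c. rewrite <- Hsum. unfold Wt, Wpp, Wp. ring.
Qed.

(* Increments [W(t, q + h) - W(t, q)] solve a linear equation with bounded drift. *)
Lemma summed_value_increment_interior t q h : 0 < t <= T ->
  Rabs (W t (q + h) - W t q) <= L * Rabs h.
Proof.
  intros Ht.
  destruct summed_value_bounded as [M HM].
  apply (max_principle_abs T t (/ 2 * sigma ^ 2) (Rabs c * (2 * M)) (2 * M) (L * Rabs h)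
    (fun t q => W t (q + h) - W t q) (fun t q => Wt t (q + h) - Wt t q)
    (fun t q => Wp t (q + h) - Wp t q) (fun t q => Wpp t (q + h) - Wpp t q)
    (fun t q => c * (Wp t (q + h) + Wp t q))); try lra.
  - apply Rmult_lt_0_compat; [lra | apply pow_lt; lra].
  - pose proof (Rabs_pos (W 0 0)). pose proof (proj1 (HM 0 0 ltac:(lra))).
    apply Rmult_le_pos; [apply Rabs_pos | lra].
  - apply (strip_continuous_mono 0 T); [lra | lra |].
    apply strip_continuous_minus; [apply strip_continuous_shift |];
      apply summed_value_strip_continuous.
  - intros s r Hs. apply (is_derive_minus (fun s => W s (r + h)));
      apply summed_value_derive_t; lra.
  - intros s r Hs. apply (is_derive_minus (fun r => W s (r + h)));
      [apply is_derive_shift |]; apply summed_value_derive_p; lra.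
  - intros s r Hs. apply (is_derive_minus (fun r => Wp s (r + h)));
      [apply is_derive_shift |]; apply summed_value_derive_p; lra.
  - intros s r Hs.
    destruct (HM s (r + h) ltac:(lra)) as [H1h _]. destruct (HM s r ltac:(lra)) as [H1r _].
    pose proof (Rabs_triang (W s (r + h)) (- W s r)).
    rewrite Rabs_Ropp in *. unfold Rminus. lra.
  - intros s r Hs.
    destruct (HM s (r + h) ltac:(lra)) as [_ H1h]. destruct (HM s r ltac:(lra)) as [_ H1r].
    rewrite Rabs_mult. apply Rmult_le_compat_l; [apply Rabs_pos |].
    pose proof (Rabs_triang (Wp s (r + h)) (Wp s r)). specialize (H1h (proj2 Hs)).
    specialize (H1r (proj2 Hs)). lra.
  - intros s r Hs. cbv beta.
    pose proof (summed_value_pde s (r + h) ltac:(lra)). pose proof (summed_value_pde s r ltac:(lra)).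
    nra.
  - intros r. rewrite !summed_value_terminal.
    replace (Rabs h) with (Rabs (r + h - r)) by (f_equal; ring). apply HL.
Qed.

Lemma summed_value_increment t q h : 0 <= t <= T ->
  Rabs (W t (q + h) - W t q) <= L * Rabs h.
Proof.
  intros Ht. destruct (Rle_lt_or_eq_dec 0 t (proj1 Ht)) as [Hpos | <-].
  - apply summed_value_increment_interior. lra.
  - apply (strip_bound_left_end (fun u r => W u (r + h) - W u r) 0 T (L * Rabs h) HT).
    + apply strip_continuous_minus; [apply strip_continuous_shift |];
        apply summed_value_strip_continuous.
    + intros u r Hu. apply summed_value_increment_interior, Hu.
Qed.

Lemma summed_slope_bound t q : 0 <= t < T -> Rabs (psum N (fun i => vp i t q)) <= L.
Proof.
  intros Ht. apply (is_derive_abs_le_of_lipschitz (fun r => W t r) q).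
  - apply summed_value_derive_p, Ht.
  - intros h. apply summed_value_increment. lra.
Qed.

End SummedValue.

Theorem mainTheorem6 (T sigma lam kappa : R) (H1 : R -> R)
  (v vt vp vpp : nat -> nat -> R -> R -> R) :
  0 < T -> 0 < sigma -> 0 < lam -> 0 < kappa ->
  C2b H1 -> (exists p0, H1 p0 <> 0) ->
  (forall N : nat, (1 <= N)%nat ->
     classical_solution T sigma lam kappa N (claims H1)
       (v N) (vt N) (vp N) (vpp N)) ->
  forall t p : R, 0 <= t < T ->
    is_lim_seq (fun N : nat => agg_speed lam kappa N (vp N) t p) 0.
Proof.
  intros HT Hsigma Hlam Hkappa (H' & H'' & HH' & _ & _ & M & HM) _ Hsol t p Ht.
  assert (HM0 : 0 <= M) by (pose proof (Rabs_pos (H1 0)); pose proof (HM 0); lra).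
  assert (HL : forall x y, Rabs (H1 y - H1 x) <= M * Rabs (y - x)).
  { apply (lipschitz_of_derive_bound H1 H'); [exact HH' | intros x; apply HM]. }
  assert (Hslope : forall N, Rabs (psum N (fun i => vp N i t p)) <= M).
  { intros [| N]; [rewrite psum_0, Rabs_R0; exact HM0 |].
    apply (summed_slope_bound T sigma lam kappa M H1 (S N) (v (S N)) (vt (S N))
             (vp (S N)) (vpp (S N))); try assumption; [lia | apply Hsol; lia]. }
  assert (Hbound : forall N,
    Rabs (agg_speed lam kappa N (vp N) t p) <= lam / kappa * M * / INR (S N)).
  { intros N. rewrite agg_speed_eq by exact Hkappa.
    assert (Hpos : 0 < lam / kappa / INR (N + 1)).
    { apply Rdiv_lt_0_compat; [apply Rdiv_lt_0_compat; lra | apply lt_0_INR; lia]. }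
    rewrite Rabs_mult, (Rabs_right _ (Rle_ge _ _ (Rlt_le _ _ Hpos))).
    replace (S N) with (N + 1)%nat by lia.
    replace (lam / kappa * M * / INR (N + 1)) with (lam / kappa / INR (N + 1) * M)
      by (unfold Rdiv; ring).
    apply Rmult_le_compat_l; [lra | apply Hslope]. }
  assert (Hinv : is_lim_seq (fun N => lam / kappa * M * / INR (S N)) 0).
  { assert (H0 : is_lim_seq (fun N => / INR N) 0).
    { replace (Finite 0) with (Rbar_inv p_infty) by reflexivity.
      apply is_lim_seq_inv; [apply is_lim_seq_INR | discriminate]. }
    apply is_lim_seq_incr_1, (is_lim_seq_scal_l _ (lam / kappa * M)) in H0.
    simpl in H0. rewrite Rmult_0_r in H0. exact H0. }
  apply is_lim_seq_abs_0.
  apply (is_lim_seq_le_le (fun _ => 0) _ _ 0 (fun N => conj (Rabs_pos _) (Hbound N)));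
    [apply is_lim_seq_const | exact Hinv].
Qed.
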